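(* Let $K$ be a field (of arbitrary characteristic) and $V$ a homogeneous $K$-subspace of $K[x]$. Then $V$ is a Mathieu subspace of $K[x]$ if and only if one of the following holds: 1) $V=K[x]$; 2) $\dim_K V<\infty$ and $1\notin V$; 3) $1\notin V$ and there exists $N\ge1$ such that the ideal $x^NK[x]$ is contained in $V$; 4) $V$ is spanned over $K$ by the monomials $x^{n_i}$ for a strictly increasing infinite sequence of positive integers $\{n_i\mid i\ge1\}$ such that there is no integer $d\ge1$ with $md\in\{n_i\mid i\ge1\}$ for all $m\ge1$.
   Context: A $K$-subspace $V$ of $K[x]$ is homogeneous if it is spanned by the monomials $x^n$ it contains (equivalently, the homogeneous components of each element of $V$ lie in $V$). A $K$-subspace $V$ of a commutative $K$-algebra $\mathcal{A}$ is a Mathieu subspace if for all $a,b\in\mathcal{A}$ with $a^m\in V$ for all $m\ge 1$, one has $a^mb\in V$ for all $m\gg 0$. *)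

From mathcomp Require Import all_boot all_order all_algebra.
Set Implicit Arguments. Unset Strict Implicit. Unset Printing Implicit Defensive.
Import GRing.Theory.
Local Open Scope ring_scope.

Definition is_subspace (K : fieldType) (V : {poly K} -> Prop) : Prop :=
  V 0 /\ (forall (a : K) (p q : {poly K}), V p -> V q -> V (a *: p + q)).

Definition homogeneous (K : fieldType) (V : {poly K} -> Prop) : Prop :=
  forall p : {poly K}, V p -> forall n : nat, V (p`_n *: 'X^n).

Definition mathieu (K : fieldType) (V : {poly K} -> Prop) : Prop :=
  forall a b : {poly K}, (forall m : nat, (1 <= m)%N -> V (a ^+ m)) ->
    exists N : nat, forall m : nat, (N <= m)%N -> V (a ^+ m * b).

Definition spanned_by_fin (K : fieldType) (V : {poly K} -> Prop)
  (n : nat) (B : 'I_n -> {poly K}) : Prop :=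
  forall p : {poly K}, V p <-> exists c : 'I_n -> K, p = \sum_(i < n) c i *: B i.

Definition finite_dim (K : fieldType) (V : {poly K} -> Prop) : Prop :=
  exists (n : nat) (B : 'I_n -> {poly K}), spanned_by_fin V B.

Definition spanned_by_monomials (K : fieldType) (V : {poly K} -> Prop)
  (s : nat -> nat) : Prop :=
  forall p : {poly K}, V p <->
    exists (M : nat) (c : 'I_M -> K), p = \sum_(i < M) c i *: 'X^(s i).

From mathcomp Require Import all_boot all_order all_algebra boolp.
Import GRing.Theory.
Set Implicit Arguments. Unset Strict Implicit.
Local Open Scope ring_scope.

(* For homogeneous V everything is decided by the support
   S = {n | x^n \in V}.  If a <> 0 has all its powers in V and x^k is the
   lowest monomial of a, then x^(km) is the lowest monomial of a^m, so S
   contains every km with m >= 1.  Thus if 0 \notin S and S contains no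
   progression dN_{>=1} with d >= 1, the only such a is 0 and V is trivially
   Mathieu: this covers cases 2 and 4.  If S does contain such a progression,
   the Mathieu property for a = x^d forces all large monomials into V, giving
   case 3; and in case 3 every a with all a^m \in V has a(0) = 0, so
   a^m b \in x^N K[x] for m >= N.  When S contains no progression it is
   either bounded (case 2) or can be enumerated increasingly (case 4). *)

Lemma incr_leq_add (s : nat -> nat) :
  (forall i, (s i < s i.+1)%N) -> forall i, (s 0 + i <= s i)%N.
Proof.
move=> s_incr; elim=> [|i IHi]; first by rewrite addn0.
by rewrite addnS; apply: leq_ltn_trans IHi (s_incr i).
Qed.

Lemma enum_unbounded (P : nat -> Prop) :
  (forall B, exists2 n, (B <= n)%N & P n) ->
  exists s : nat -> nat,
    (forall i, (s i < s i.+1)%N) /\ (forall n, P n <-> exists i, s i = n).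
Proof.
move=> P_unbounded.
have exP B : exists n, (B <= n)%N && `[< P n >].
  by have [n Bn Pn] := P_unbounded B; exists n; rewrite Bn; apply/asboolP.
pose next B := ex_minn (exP B).
have nextP B : [/\ (B <= next B)%N, P (next B)
               & forall n, (B <= n)%N -> P n -> (next B <= n)%N].
  rewrite /next; case: ex_minnP => m /andP[Bm /asboolP Pm] min_m.
  by split=> // n Bn /asboolP Pn; apply: min_m; rewrite Bn.
pose s i := iter i (fun n => next n.+1) (next 0%N).
have s_incr i : (s i < s i.+1)%N by have [] := nextP (s i).+1.
exists s; split=> // n; split=> [Pn | [[|i] <-]]; last 2 first.
- by have [] := nextP 0%N.
- by have [] := nextP (s i).+1.
have : exists i, (n <= s i)%N.
  by exists n; apply: leq_trans (leq_addl _ _) (incr_leq_add s_incr n).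
case/ex_minnP=> i n_le_si min_i; exists i; apply/eqP.
rewrite eqn_leq n_le_si andbT.
case: i n_le_si min_i => [|i] _ min_i; first by have [_ _ ->] := nextP 0%N.
have [_ _ -> //] := nextP (s i).+1.
by rewrite ltnNge; apply/negP => /min_i; rewrite ltnn.
Qed.

Lemma coef_expr_valuation_neq0 (R : idomainType) (a : {poly R}) :
  a != 0 -> exists k, forall m, (a ^+ m)`_(k * m) != 0.
Proof.
move=> a0; case: (multiplicity_XsubC a 0) => k [u]; rewrite a0 /= => u0 ->.
exists k => m; rewrite polyC0 subr0 exprMn -exprM coefMXn ltnn subnn.
by rewrite -horner_coef0 horner_exp expf_neq0.
Qed.

Section HomogeneousSubspace.
Variables (K : fieldType) (V : {poly K} -> Prop).
Hypothesis V_subspace : is_subspace V.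

Lemma subspace0 : V 0.
Proof. by case: V_subspace. Qed.

Lemma subspaceZ c p : V p -> V (c *: p).
Proof.
by case: V_subspace => V0 VZD Vp; rewrite -[_ *: p]addr0; apply: VZD.
Qed.

Lemma subspaceD p q : V p -> V q -> V (p + q).
Proof.
by case: V_subspace => _ VZD Vp; rewrite -[p]scale1r; apply: VZD.
Qed.

Lemma subspace_sum I (r : seq I) (P : pred I) (F : I -> {poly K}) :
  (forall i, P i -> V (F i)) -> V (\sum_(i <- r | P i) F i).
Proof.
by move=> VF; apply: (big_ind V); [exact: subspace0 | exact: subspaceD |].
Qed.

Definition monomial_progression (d : nat) :=
  forall m, (1 <= m)%N -> V 'X^(m * d).

Definition support_bounded := exists B, forall n, V 'X^n -> (n < B)%N.

Lemma support_bounded_no_progression :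
  support_bounded -> forall d, (1 <= d)%N -> ~ monomial_progression d.
Proof.
move=> [B VB] d d1 Vd; have := VB _ (Vd B.+1 isT).
by rewrite ltnNge (leq_trans (leqnSn B) (leq_pmulr _ d1)).
Qed.

Lemma finite_dim_support_bounded : finite_dim V -> support_bounded.
Proof.
case=> k [E VE]; exists (\max_(i < k) size (E i)) => n /VE[c Xn_eq].
rewrite ltnNge; apply/negP => Bn.
have /eqP := congr1 (fun p : {poly K} => p`_n) Xn_eq.
rewrite coefXn eqxx coef_sum big1 ?oner_eq0 // => i _.
by rewrite coefZ nth_default ?mulr0 //; apply: leq_trans (leq_bigmax i) Bn.
Qed.

Lemma spanned_by_monomials_Xn s n :
  spanned_by_monomials V s -> V 'X^n -> exists i, s i = n.
Proof.
move=> Vs /Vs[M [c Xn_eq]]; apply: contrapT => no_i.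
have /eqP := congr1 (fun p : {poly K} => p`_n) Xn_eq.
rewrite coefXn eqxx coef_sumMXn big_pred0 ?oner_eq0 // => i /=.
by apply/negP => /eqP si; apply: no_i; exists i.
Qed.

Lemma mathieu_full_of_one : mathieu V -> V 1 -> forall p, V p.
Proof.
move=> VM V1 p; case: (VM 1 p) => [m _ | N VN]; first by rewrite expr1n.
by have := VN N (leqnn N); rewrite expr1n mul1r.
Qed.

Hypothesis V_homogeneous : homogeneous V.

Lemma homogeneous_Xn p n : V p -> p`_n != 0 -> V 'X^n.
Proof.
move=> Vp pn; have := subspaceZ (p`_n)^-1 (V_homogeneous Vp n).
by rewrite scalerA mulVf // scale1r.
Qed.

Lemma homogeneousP p : V p <-> forall n, p`_n != 0 -> V 'X^n.
Proof.
split=> [Vp n | VX]; first exact: homogeneous_Xn.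
rewrite -[p]coefK poly_def; apply: subspace_sum => i _.
have [-> | pi] := eqVneq p`_i 0; first by rewrite scale0r; apply: subspace0.
by apply/subspaceZ/VX.
Qed.

Lemma progression_of_powers a : a != 0 ->
  (forall m, (1 <= m)%N -> V (a ^+ m)) -> exists k, monomial_progression k.
Proof.
move=> a0 Va; have [k ak] := coef_expr_valuation_neq0 a0.
by exists k => m m1; rewrite mulnC; apply: homogeneous_Xn (Va m m1) (ak m).
Qed.

Lemma mathieu_no_progression :
  ~ V 1 -> (forall d, (1 <= d)%N -> ~ monomial_progression d) -> mathieu V.
Proof.
move=> V1 no_prog a b Va; have [-> | a0] := eqVneq a 0.
  by exists 1%N => -[|m] // _; rewrite expr0n mul0r; apply: subspace0.
case: (progression_of_powers a0 Va) => -[|d] Vd; last by case: (no_prog d.+1).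
by case: V1; have := Vd 1%N isT; rewrite muln0 expr0.
Qed.

Lemma mathieu_ideal N :
  ~ V 1 -> (forall q : {poly K}, V ('X^N * q)) -> mathieu V.
Proof.
move=> V1 VXN a b Va.
have /factor_theorem[u ->] : root a 0.
  rewrite rootE horner_coef0; apply: contraT => a0; case: V1.
  by rewrite -(expr0 'X); apply: homogeneous_Xn (Va 1%N isT) _.
exists N => m /subnK <-; rewrite polyC0 subr0 exprMn (exprD 'X).
by rewrite [_ * 'X^N]mulrC mulrCA -mulrA; apply: VXN.
Qed.

Lemma ideal_of_tail N :
  (forall n, (N <= n)%N -> V 'X^n) -> forall q : {poly K}, V ('X^N * q).
Proof.
move=> VN q; apply/homogeneousP => n; rewrite coefXnM.
by case: ltnP => [_ | Nn _]; [rewrite eqxx | apply: VN].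
Qed.

Lemma mathieu_progression_tail d : mathieu V -> (1 <= d)%N ->
  monomial_progression d -> exists N, forall n, (N <= n)%N -> V 'X^n.
Proof.
(* [\poly_(i < d) 1] = 1 + x + ... + x^(d-1) fills the gaps between the
   multiples of d. *)
move=> VM d1 Vd; have [N VN] : exists N, forall m, (N <= m)%N ->
    V ('X^d ^+ m * \poly_(i < d) 1).
  by apply: VM => m m1; rewrite -exprM mulnC; apply: Vd.
exists (N * d)%N => n Nn; apply: homogeneous_Xn (VN (n %/ d)%N _) _.
  by rewrite leq_divRL.
rewrite -exprM coefXnM {1 3}(divn_eq n d) mulnC ltnNge leq_addr addKn.
by rewrite coef_poly ltn_pmod // oner_eq0.
Qed.

Lemma mathieu_ideal_of_progression d :
  mathieu V -> (1 <= d)%N -> monomial_progression d ->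
  exists N, (1 <= N)%N /\ forall q : {poly K}, V ('X^N * q).
Proof.
move=> VM d1 Vd; have [N VN] := mathieu_progression_tail VM d1 Vd.
by exists N.+1; split=> //; apply: ideal_of_tail => n /ltnW/VN.
Qed.

Lemma support_bounded_finite_dim : support_bounded -> finite_dim V.
Proof.
move=> [B VB].
pose E (i : 'I_B) : {poly K} := if `[< V 'X^i >] then 'X^i else 0.
exists B, E => p; split=> [Vp | [c ->]]; last first.
  apply: subspace_sum => i _; apply: subspaceZ; rewrite /E.
  by case: asboolP => // _; apply: subspace0.
have size_p : (size p <= B)%N.
  apply/leq_sizeP => j Bj; apply/eqP; apply: contraTT Bj.
  by move=> /(homogeneous_Xn Vp)/VB; rewrite -ltnNge.
exists (fun i => p`_i); rewrite -{1}(take_poly_id size_p) /take_poly poly_def.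
apply: eq_bigr => i _; rewrite /E; case: asboolP => // notV.
suff -> : p`_i = 0 by rewrite !scale0r.
by apply/eqP; apply: contra_notT notV => /(homogeneous_Xn Vp).
Qed.

Lemma spanned_by_monomials_enum s : (forall i, (s i < s i.+1)%N) ->
  (forall n, V 'X^n <-> exists i, s i = n) -> spanned_by_monomials V s.
Proof.
move=> s_incr s_range p; split=> [Vp | [M [c ->]]]; last first.
  by apply: subspace_sum => i _; apply/subspaceZ/s_range; exists i.
have s_inj : injective s by apply/incn_inj/leq_mono/(homo_ltn ltn_trans).
exists (size p), (fun i => p`_(s i)); apply/polyP => j; rewrite coef_sumMXn.
have [pj0 | pj] := eqVneq p`_j 0; first by rewrite pj0 big1 // => i /eqP ->.
have [i sij] := (s_range j).1 (homogeneous_Xn Vp pj).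
have i_lt : (i < size p)%N.
  apply: leq_ltn_trans (leq_trans (leq_addl _ _) (incr_leq_add s_incr i)) _.
  by rewrite sij ltnNge; apply: contra pj => /(nth_default 0) ->.
rewrite (big_pred1 (Ordinal i_lt)) ?sij // => k /=.
by rewrite -sij (inj_eq s_inj).
Qed.

Lemma unbounded_support_enum : ~ V 1 -> ~ support_bounded ->
  exists s, [/\ forall i, (s i < s i.+1)%N, (1 <= s 0)%N,
              spanned_by_monomials V s
            & forall n, V 'X^n <-> exists i, s i = n].
Proof.
move=> V1 unbounded.
have [|s [s_incr s_range]] := @enum_unbounded (fun n => V 'X^n).
  move=> B; apply: contrapT => no_n; apply: unbounded; exists B => n Vn.
  by rewrite ltnNge; apply/negP => Bn; apply: no_n; exists n.
exists s; split=> //; last exact: spanned_by_monomials_enum.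
rewrite lt0n; apply/eqP => s00; apply: V1.
by rewrite -(expr0 'X) -s00; apply/s_range; exists 0%N.
Qed.

Lemma mathieu_spanned_by_monomials s :
  (forall i, (s i < s i.+1)%N) -> (1 <= s 0)%N -> spanned_by_monomials V s ->
  ~ (exists d, (1 <= d)%N /\
       forall m, (1 <= m)%N -> exists i, (m * d)%N = s i) ->
  mathieu V.
Proof.
move=> s_incr s0 Vs no_d; apply: mathieu_no_progression => [|d d1 Vd].
  rewrite -(expr0 'X) => /(spanned_by_monomials_Xn Vs)[i si0].
  by move: (incr_leq_add s_incr i); rewrite si0 leqn0 addn_eq0 eqn0Ngt s0.
apply: no_d; exists d; split=> // m m1.
by have [i si] := spanned_by_monomials_Xn Vs (Vd m m1); exists i; rewrite si.
Qed.

End HomogeneousSubspace.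

Theorem proposition3p5 (K : fieldType) (V : {poly K} -> Prop) :
  is_subspace V -> homogeneous V ->
  (mathieu V <->
     [\/ (forall p : {poly K}, V p),
         finite_dim V /\ ~ V 1,
         ~ V 1 /\ (exists N : nat, (1 <= N)%N /\
                     forall q : {poly K}, V ('X^N * q))
       | exists s : nat -> nat,
           [/\ (forall i : nat, (s i < s i.+1)%N),
               (1 <= s 0)%N,
               spanned_by_monomials V s
             & ~ (exists d : nat, (1 <= d)%N /\
                    forall m : nat, (1 <= m)%N -> exists i : nat, (m * d)%N = s i)]]).
Proof.
move=> hV hH; split=> [VM | ].
  have [V1 | V1] := pselect (V 1); first exact/Or41/(mathieu_full_of_one VM).
  have [[d [d1 Vd]] | no_prog] :=
    pselect (exists d, (1 <= d)%N /\ monomial_progression V d).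
    by apply: Or43; split=> //; apply: mathieu_ideal_of_progression VM d1 Vd.
  have [bounded | unbounded] := pselect (support_bounded V).
    by apply: Or42; split=> //; apply: support_bounded_finite_dim.
  have [s [s_incr s0 Vs s_range]] := unbounded_support_enum hV hH V1 unbounded.
  apply: Or44; exists s; split=> // -[d [d1 s_d]]; apply: no_prog.
  exists d; split=> // m m1; apply/s_range.
  by have [i ->] := s_d m m1; exists i.
case=> [V_full | [fin V1] | [V1 [N [_ VXN]]] | [s [s_incr s0 Vs no_d]]].
- by move=> a b _; exists 0%N => m _; apply: V_full.
- apply: mathieu_no_progression => //.
  exact/support_bounded_no_progression/finite_dim_support_bounded.
- exact: (mathieu_ideal hV hH V1 VXN).
- exact: (mathieu_spanned_by_monomials hV hH s_incr s0 Vs no_d).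
Qed.
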